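(* In any execution of Algorithm $\mathsf{AG}$ (described in the context) with a guild, there exist a process $p_i$ in the maximal guild and a quorum $Q_i\in\mathcal{Q}_i$ for $p_i$ such that every process in $Q_i$ receives a $\mathrm{DistributeS}$ message from $p_i$ before it sends a $\mathrm{DistributeT}$ message.
   Context: System model: a finite set $\mathcal{P}=\{p_1,\dots,p_n\}$ of processes communicating asynchronously over authenticated point-to-point links; every message sent from a correct process to a correct process is eventually delivered. A process that follows its protocol is correct; others (faulty, Byzantine) may behave arbitrarily. $F\subseteq\mathcal{P}$ denotes the (unknown) set of faulty processes of an execution. For $\mathcal{A}\subseteq 2^{\mathcal{P}}$, write $\mathcal{A}^*=\{A' : A'\subseteq A,\ A\in\mathcal{A}\}$. An asymmetric fail-prone system is an array $\mathbb{F}=[\mathcal{F}_1,\dots,\mathcal{F}_n]$ with $\mathcal{F}_i\subseteq 2^{\mathcal{P}}$. An asymmetric Byzantine quorum system for $\mathbb{F}$ is an array $\mathbb{Q}=[\mathcal{Q}_1,\dots,\mathcal{Q}_n]$ with $\mathcal{Q}_i\subseteq 2^{\mathcal{P}}$ (quorums for $p_i$) satisfying: (consistency) for all $i,j$, all $Q_i\in\mathcal{Q}_i$, $Q_j\in\mathcal{Q}_j$, $F_{ij}\in\mathcal{F}_i^*\cap\mathcal{F}_j^*$: $Q_i\cap Q_j\not\subseteq F_{ij}$; (availability) for all $i$ and $F_i\in\mathcal{F}_i$ there is $Q_i\in\mathcal{Q}_i$ with $F_i\cap Q_i=\emptyset$. A kernel for $p_i$ is a set $K\subseteq\mathcal{P}$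 intersecting every $Q\in\mathcal{Q}_i$; $\mathcal{K}_i$ is the set of kernels for $p_i$. A correct process $p_i$ is wise if $F\in\mathcal{F}_i^*$. A guild is a set $\mathcal{G}$ of wise processes such that every $p_i\in\mathcal{G}$ has some $Q_i\in\mathcal{Q}_i$ with $Q_i\subseteq\mathcal{G}$. An execution with a guild is one in which a nonempty guild exists; the maximal guild $\mathcal{G}_{max}$ is the union of all guilds. Asymmetric reliable broadcast (arb-broadcast / arb-deliver) guarantees, in every execution with a guild: if a correct process arb-broadcasts $m$, every process of $\mathcal{G}_{max}$ eventually arb-delivers $m$; for each sender, all processes of $\mathcal{G}_{max}$ that arb-deliver from it deliver the same message; if some process of $\mathcal{G}_{max}$ arb-delivers a message from a sender, all processes of $\mathcal{G}_{max}$ eventually arb-deliver a message from that sender; a correct process arb-delivers at most one message per sender, and from a correct sender only a message it arb-broadcast. Algorithm $\mathsf{AG}$ (code of $p_i$; each correct process invokes ag-propose$(x_i)$ exactly once; each guarded ''upon there being ...'' action executes at most once, message handlers once per message). State: sets $S_i,T_i,U_i$ initially empty, boolean $sentT$ initially false. (1) Upon ag-propose$(x_i)$: arb-broadcast $(p_i,x_i)$. (2) Upon arb-delivering $(p_j,x_j)$ from $p_j$: $S_i\gets S_i\cup\{(p_j,x_j)\}$. (3) Upon there being $Q\in\mathcal{Q}_i$ such that for every $p_j\in Q$ some pair $(p_j,\cdot)\in S_i$: send $\langle\mathrm{DistributeS},p_i,S_i\rangle$ to all. (4) For a received $\langle\mathrm{DistributeS},p_j,S_j\rangle$: once $S_j\subseteq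 S_i$, provided $sentT$ is false at that moment, set $T_i\gets T_i\cup S_j$ and send $\langle\mathrm{Ack},p_i\rangle$ to $p_j$. (5) Upon Ack received from every member of some $Q\in\mathcal{Q}_i$: send Ready to all. (6) Upon Ready received from every member of some $Q\in\mathcal{Q}_i$: send Confirm to all. (7) Upon Confirm received from every member of some $K\in\mathcal{K}_i$: send Confirm to all. (8) Upon Confirm received from every member of some $Q\in\mathcal{Q}_i$: send $\langle\mathrm{DistributeT},p_i,T_i\rangle$ to all and set $sentT\gets$ true. (9) For a received $\langle\mathrm{DistributeT},p_j,T_j\rangle$ from $p_j$: once $T_j\subseteq S_i$, set $U_i\gets U_i\cup T_j$. (10) Upon DistributeT received from every member of some $Q\in\mathcal{Q}_i$: ag-deliver$(U_i)$. *)

From mathcomp Require Import all_boot.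
Set Implicit Arguments.
Unset Strict Implicit.
Unset Printing Implicit Defensive.

Section Trust.
Variable P : finType.

Definition in_star (A : {set {set P}}) (X : {set P}) : Prop :=
  exists2 Y, Y \in A & X \subset Y.

Definition asym_quorum_system (Fs Qs : P -> {set {set P}}) : Prop :=
  (forall i j (Qi Qj Fij : {set P}),
      Qi \in Qs i -> Qj \in Qs j -> in_star (Fs i) Fij -> in_star (Fs j) Fij ->
      ~~ (Qi :&: Qj \subset Fij))
  /\ (forall i (Fi : {set P}), Fi \in Fs i ->
      exists2 Q, Q \in Qs i & [disjoint Fi & Q]).

Definition kernel (Qs : P -> {set {set P}}) (i : P) (K : {set P}) : Prop :=
  forall Q, Q \in Qs i -> ~~ [disjoint K & Q].

Definition wise (Fs : P -> {set {set P}}) (F : {set P}) (i : P) : Prop :=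
  i \notin F /\ in_star (Fs i) F.

Definition guild (Fs Qs : P -> {set {set P}}) (F : {set P}) (G : {set P}) : Prop :=
  forall i, i \in G -> wise Fs F i /\ exists2 Q, Q \in Qs i & Q \subset G.

Definition has_guild Fs Qs F : Prop := exists2 G, guild Fs Qs F G & G != set0.

(* membership in the maximal guild (the union of all guilds) *)
Definition in_Gmax Fs Qs F (i : P) : Prop := exists2 G, guild Fs Qs F G & i \in G.

End Trust.

Section AG.
Variables (P : finType) (V : Type).
Variables (Qs : P -> {set {set P}}) (F : {set P}).

Definition pset := P * V -> Prop.
Definition psub (A B : pset) : Prop := forall x, A x -> B x.
Definition punion (A B : pset) : pset := fun x => A x \/ B x.
Definition pempty : pset := fun _ => False.

(* point-to-point messages; the sender identity p_j of DistributeS /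
   DistributeT / Ack is the (authenticated) sender of the message *)
Inductive msg :=
| DistributeS of pset
| AckM
| ReadyM
| ConfirmM
| DistributeT of pset.

Record lstate := LState {
  proposed : bool;
  sS : pset; sT : pset; sU : pset;
  sentT : bool;
  fired3 : bool; fired5 : bool; fired6 : bool; fired7 : bool; fired10 : bool;
  ackFrom : {set P}; readyFrom : {set P}; confirmFrom : {set P};
  distTFrom : {set P};
  pendS : seq (P * pset);   (* received DistributeS waiting for S_j ⊆ S_i *)
  pendT : seq (P * pset)    (* received DistributeT waiting for T_j ⊆ S_i *)
}.

Definition linit : lstate :=
  LState false pempty pempty pempty false false false false false false
         set0 set0 set0 set0 [::] [::].

(* global configuration: local states, in-transit messages
   (sender, destination, message), ag-deliver outputs *)
Record config := Config {
  lst : P -> lstate;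
  net : seq (P * P * msg);
  agOut : P -> option pset
}.

Definition cinit : config := Config (fun _ => linit) [::] (fun _ => None).

Definition upd {A : Type} (f : P -> A) (i : P) (a : A) : P -> A :=
  fun j => if j == i then a else f j.

Definition send_all (i : P) (m : msg) : seq (P * P * msg) :=
  [seq (i, d, m) | d <- enum P].

Inductive event :=
| Idle
| ByzSend of P & P & msg
| Propose of P & V               (* (1) ag-propose(x) and arb-broadcast (p_i,x) *)
| ArbDeliver of P & P & V
| Receive of P & P & msg         (* Receive s d m : d receives m from s *)
| DoDistS of P
| DoAck of P & P & pset
| DoReady of P
| DoConfirm6 of P
| DoConfirm7 of P
| DoDistT of P
| DoU of P & P & pset
| DoDeliver of P.

Definition setl (c : config) (i : P) (l : lstate) (nt : seq (P * P * msg)) :=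
  Config (upd (lst c) i l) nt (agOut c).

Definition step (c : config) (e : event) (c' : config) : Prop :=
  match e with
  | Idle => c' = c
  | ByzSend s d m => s \in F /\ c' = Config (lst c) (net c ++ [:: (s, d, m)]) (agOut c)
  | Propose i x =>
      let l := lst c i in
      i \notin F /\ ~~ proposed l /\
      c' = setl c i
        (LState true (sS l) (sT l) (sU l) (sentT l) (fired3 l) (fired5 l) (fired6 l)
                (fired7 l) (fired10 l) (ackFrom l) (readyFrom l) (confirmFrom l)
                (distTFrom l) (pendS l) (pendT l)) (net c)
  | ArbDeliver i j x =>
      let l := lst c i in
      i \notin F /\
      c' = setl c i
        (LState (proposed l) (punion (sS l) (fun p => p = (j, x))) (sT l) (sU l)
                (sentT l) (fired3 l) (fired5 l) (fired6 l)
                (fired7 l) (fired10 l) (ackFrom l) (readyFrom l) (confirmFrom l)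
                (distTFrom l) (pendS l) (pendT l)) (net c)
  | Receive s d m =>
      let l := lst c d in
      d \notin F /\
      exists l1 l2, net c = l1 ++ (s, d, m) :: l2 /\
      c' = setl c d
        (match m with
         | DistributeS Sj =>
             LState (proposed l) (sS l) (sT l) (sU l) (sentT l) (fired3 l) (fired5 l)
               (fired6 l) (fired7 l) (fired10 l) (ackFrom l) (readyFrom l)
               (confirmFrom l) (distTFrom l) (rcons (pendS l) (s, Sj)) (pendT l)
         | AckM =>
             LState (proposed l) (sS l) (sT l) (sU l) (sentT l) (fired3 l) (fired5 l)
               (fired6 l) (fired7 l) (fired10 l) (s |: ackFrom l) (readyFrom l)
               (confirmFrom l) (distTFrom l) (pendS l) (pendT l)
         | ReadyM =>
             LState (proposed l) (sS l) (sT l) (sU l) (sentT l) (fired3 l) (fired5 l)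
               (fired6 l) (fired7 l) (fired10 l) (ackFrom l) (s |: readyFrom l)
               (confirmFrom l) (distTFrom l) (pendS l) (pendT l)
         | ConfirmM =>
             LState (proposed l) (sS l) (sT l) (sU l) (sentT l) (fired3 l) (fired5 l)
               (fired6 l) (fired7 l) (fired10 l) (ackFrom l) (readyFrom l)
               (s |: confirmFrom l) (distTFrom l) (pendS l) (pendT l)
         | DistributeT Tj =>
             LState (proposed l) (sS l) (sT l) (sU l) (sentT l) (fired3 l) (fired5 l)
               (fired6 l) (fired7 l) (fired10 l) (ackFrom l) (readyFrom l)
               (confirmFrom l) (s |: distTFrom l) (pendS l) (rcons (pendT l) (s, Tj))
         end)
        (l1 ++ l2)
  | DoDistS i =>
      let l := lst c i in
      i \notin F /\ ~~ fired3 l /\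
      (exists2 Q, Q \in Qs i & forall j, j \in Q -> exists x, sS l (j, x)) /\
      c' = setl c i
        (LState (proposed l) (sS l) (sT l) (sU l) (sentT l) true (fired5 l) (fired6 l)
                (fired7 l) (fired10 l) (ackFrom l) (readyFrom l) (confirmFrom l)
                (distTFrom l) (pendS l) (pendT l))
        (net c ++ send_all i (DistributeS (sS l)))
  | DoAck i j Sj =>
      let l := lst c i in
      i \notin F /\ psub Sj (sS l) /\
      exists l1 l2, pendS l = l1 ++ (j, Sj) :: l2 /\
      c' = if sentT l then
             setl c i
               (LState (proposed l) (sS l) (sT l) (sU l) (sentT l) (fired3 l) (fired5 l)
                  (fired6 l) (fired7 l) (fired10 l) (ackFrom l) (readyFrom l)
                  (confirmFrom l) (distTFrom l) (l1 ++ l2) (pendT l)) (net c)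
           else
             setl c i
               (LState (proposed l) (sS l) (punion (sT l) Sj) (sU l) (sentT l) (fired3 l)
                  (fired5 l) (fired6 l) (fired7 l) (fired10 l) (ackFrom l) (readyFrom l)
                  (confirmFrom l) (distTFrom l) (l1 ++ l2) (pendT l))
               (net c ++ [:: (i, j, AckM)])
  | DoReady i =>
      let l := lst c i in
      i \notin F /\ ~~ fired5 l /\
      (exists2 Q, Q \in Qs i & Q \subset ackFrom l) /\
      c' = setl c i
        (LState (proposed l) (sS l) (sT l) (sU l) (sentT l) (fired3 l) true (fired6 l)
                (fired7 l) (fired10 l) (ackFrom l) (readyFrom l) (confirmFrom l)
                (distTFrom l) (pendS l) (pendT l))
        (net c ++ send_all i ReadyM)
  | DoConfirm6 i =>
      let l := lst c i in
      i \notin F /\ ~~ fired6 l /\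
      (exists2 Q, Q \in Qs i & Q \subset readyFrom l) /\
      c' = setl c i
        (LState (proposed l) (sS l) (sT l) (sU l) (sentT l) (fired3 l) (fired5 l) true
                (fired7 l) (fired10 l) (ackFrom l) (readyFrom l) (confirmFrom l)
                (distTFrom l) (pendS l) (pendT l))
        (net c ++ send_all i ConfirmM)
  | DoConfirm7 i =>
      let l := lst c i in
      i \notin F /\ ~~ fired7 l /\
      (exists K, kernel Qs i K /\ K \subset confirmFrom l) /\
      c' = setl c i
        (LState (proposed l) (sS l) (sT l) (sU l) (sentT l) (fired3 l) (fired5 l)
                (fired6 l) true (fired10 l) (ackFrom l) (readyFrom l) (confirmFrom l)
                (distTFrom l) (pendS l) (pendT l))
        (net c ++ send_all i ConfirmM)
  | DoDistT i =>
      let l := lst c i in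
      i \notin F /\ ~~ sentT l /\
      (exists2 Q, Q \in Qs i & Q \subset confirmFrom l) /\
      c' = setl c i
        (LState (proposed l) (sS l) (sT l) (sU l) true (fired3 l) (fired5 l)
                (fired6 l) (fired7 l) (fired10 l) (ackFrom l) (readyFrom l)
                (confirmFrom l) (distTFrom l) (pendS l) (pendT l))
        (net c ++ send_all i (DistributeT (sT l)))
  | DoU i j Tj =>
      let l := lst c i in
      i \notin F /\ psub Tj (sS l) /\
      exists l1 l2, pendT l = l1 ++ (j, Tj) :: l2 /\
      c' = setl c i
        (LState (proposed l) (sS l) (sT l) (punion (sU l) Tj) (sentT l) (fired3 l)
                (fired5 l) (fired6 l) (fired7 l) (fired10 l) (ackFrom l) (readyFrom l)
                (confirmFrom l) (distTFrom l) (pendS l) (l1 ++ l2))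
        (net c)
  | DoDeliver i =>
      let l := lst c i in
      i \notin F /\ ~~ fired10 l /\
      (exists2 Q, Q \in Qs i & Q \subset distTFrom l) /\
      c' = Config (upd (lst c) i
        (LState (proposed l) (sS l) (sT l) (sU l) (sentT l) (fired3 l) (fired5 l)
                (fired6 l) (fired7 l) true (ackFrom l) (readyFrom l) (confirmFrom l)
                (distTFrom l) (pendS l) (pendT l)))
        (net c) (upd (agOut c) i (Some (sU l)))
  end.

Definition is_execution (c : nat -> config) (e : nat -> event) : Prop :=
  c 0 = cinit /\ forall t, step (c t) (e t) (c t.+1).

End AG.

Arguments Idle {P V}.
Arguments ByzSend {P V}.
Arguments Propose {P V}.
Arguments ArbDeliver {P V}.
Arguments Receive {P V}.
Arguments DoDistS {P V}.
Arguments DoAck {P V}.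
Arguments DoReady {P V}.
Arguments DoConfirm6 {P V}.
Arguments DoConfirm7 {P V}.
Arguments DoDistT {P V}.
Arguments DoU {P V}.
Arguments DoDeliver {P V}.
Arguments DistributeS {P V}.
Arguments AckM {P V}.
Arguments ReadyM {P V}.
Arguments ConfirmM {P V}.
Arguments DistributeT {P V}.

(* Safety properties of asymmetric reliable broadcast, as assumptions on the
   arb-deliver events of an execution with a guild. *)
Definition arb_safety (P : finType) (V : Type) (Fs Qs : P -> {set {set P}})
    (F : {set P}) (e : nat -> event P V) : Prop :=
  (forall i k j x y t t', in_Gmax Fs Qs F i -> in_Gmax Fs Qs F k ->
      e t = ArbDeliver i j x -> e t' = ArbDeliver k j y -> x = y)
  /\ (forall i j x y t t', e t = ArbDeliver i j x -> e t' = ArbDeliver i j y -> t = t')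
  /\ (forall i j x t, j \notin F -> e t = ArbDeliver i j x ->
      exists2 t', t' < t & e t' = Propose j x).

From mathcomp Require Import all_boot.
From Stdlib Require List.
From Stdlib Require Import Classical_Prop.
Set Implicit Arguments.
Unset Strict Implicit.
Unset Printing Implicit Defensive.

(* Fix a nonempty guild G.  If some r in G ever sends Ready, it has collected
   Acks from a quorum Q of its own; a correct process acknowledges a
   DistributeS only after receiving it and only while it has not yet sent its
   DistributeT, so r and Q are the required witnesses.  Otherwise no member of
   G ever confirms, hence none sends DistributeT: by consistency every quorum
   of a member of G contains a correct member of G, and every kernel of a
   member of G meets G.  The claim then holds vacuously for any member of G
   and a quorum of it inside G. *)

Section GuildQuorums.
Variables (P : finType) (Fs Qs : P -> {set {set P}}) (F G : {set P}).
Hypotheses (HQ : asym_quorum_system Fs Qs) (HG : guild Fs Qs F G).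

Lemma guild_correct x : x \in G -> x \notin F.
Proof. by case/HG => -[]. Qed.

Lemma guild_quorum_meet g Q : g \in G -> Q \in Qs g -> exists2 x, x \in Q & x \in G.
Proof.
move=> gG Qg; have [[_ wiseF] [Q' Q'g sQ'G]] := HG gG.
have /subsetPn [x /setIP [xQ xQ'] _] := HQ.1 g g Q Q' F Qg Q'g wiseF wiseF.
by exists x => //; apply: (subsetP sQ'G).
Qed.

Lemma guild_kernel_meet g K : g \in G -> kernel Qs g K -> exists2 x, x \in K & x \in G.
Proof.
move=> gG HK; have [_ [Q Qg sQG]] := HG gG.
have /set0Pn [x /setIP [xK xQ]] : K :&: Q != set0 by rewrite setI_eq0; exact: HK.
by exists x => //; apply: (subsetP sQG).
Qed.

End GuildQuorums.

Lemma in_send_all (P : finType) V (i s d : P) (m m0 : msg P V) :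
  List.In (s, d, m) (send_all i m0) -> s = i /\ m = m0.
Proof. by rewrite /send_all; elim: (enum P) => //= a l IH [[-> _ ->]|]. Qed.

Section Execution.
Variables (P : finType) (V : Type) (Qs : P -> {set {set P}}) (F : {set P}).
Variables (c : nat -> config P V) (e : nat -> event P V).

Definition occurs_before (p : nat -> Prop) (t : nat) : Prop := exists2 t', t' < t & p t'.

Lemma occurs_before_mono p t t' : t <= t' -> occurs_before p t -> occurs_before p t'.
Proof. by move=> le_tt' [t0 lt_t0t p0]; exists t0 => //; apply: leq_trans le_tt'. Qed.

Definition receivedS_before (r q : P) : nat -> Prop :=
  occurs_before (fun t => exists S, e t = Receive r q (DistributeS S)).

(* Only the threshold messages Ack, Ready and Confirm need a provenance. *)
Definition justified (s d : P) (m : msg P V) : nat -> Prop :=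
  match m with
  | AckM => occurs_before (fun t => ~~ sentT (lst (c t) s) /\ receivedS_before d s t)
  | ReadyM => occurs_before (fun t => e t = DoReady s)
  | ConfirmM => occurs_before (fun t => e t = DoConfirm6 s \/ e t = DoConfirm7 s)
  | _ => fun _ => True
  end.

Lemma justified_mono s d m t : justified s d m t -> justified s d m t.+1.
Proof. by case: m => //=; apply: occurs_before_mono. Qed.

Definition recorded (l : lstate P V) (s : P) (m : msg P V) : Prop :=
  match m with
  | AckM => s \in ackFrom l
  | ReadyM => s \in readyFrom l
  | ConfirmM => s \in confirmFrom l
  | _ => False
  end.

Record invariant (cf : config P V) (t : nat) : Prop := Invariant {
  pending_received : forall q x, List.In x (pendS (lst cf q)) -> receivedS_before x.1 q t;
  in_transit_justified : forall s d m,
    List.In (s, d, m) (net cf) -> s \notin F -> justified s d m t;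
  recorded_justified : forall s d m, recorded (lst cf d) s m -> s \notin F -> justified s d m t
}.

Definition net_extends (cf : config P V) (nt : seq (P * P * msg P V)) (t : nat) : Prop :=
  forall s d m, List.In (s, d, m) nt ->
    List.In (s, d, m) (net cf) \/ (s \notin F -> justified s d m t).

Lemma invariant_init : invariant (cinit P V) 0.
Proof. by split=> /= [q x []|s d m []|s d [] //=]; rewrite in_set0. Qed.

Lemma invariant_mono cf t : invariant cf t -> invariant cf t.+1.
Proof.
case=> Hp Hn Hr; split=> [q x /Hp|s d m /Hn H /H|s d m /Hr H /H];
  by [apply: occurs_before_mono | apply: justified_mono].
Qed.

Lemma invariant_frame cf t l' nt {ag} : invariant cf t ->
  (forall q x, List.In x (pendS (l' q)) ->
     List.In x (pendS (lst cf q)) \/ receivedS_before x.1 q t.+1) ->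
  (forall s d m, recorded (l' d) s m ->
     recorded (lst cf d) s m \/ (s \notin F -> justified s d m t.+1)) ->
  net_extends cf nt t.+1 ->
  invariant (Config l' nt ag) t.+1.
Proof.
move=> /invariant_mono [Hp Hn Hr] Hp' Hr' Hn'; split=> /=.
- by move=> q x /Hp' [/Hp|].
- by move=> s d m /Hn' [/Hn|].
- by move=> s d m /Hr' [/Hr|].
Qed.

Lemma invariant_update cf t i L nt {ag} : invariant cf t ->
  (forall x, List.In x (pendS L) -> List.In x (pendS (lst cf i))) ->
  (forall s m, recorded L s m -> recorded (lst cf i) s m) ->
  net_extends cf nt t.+1 ->
  invariant (Config (upd (lst cf) i L) nt ag) t.+1.
Proof.
move=> Hi HpL HrL; apply: (invariant_frame Hi) => [q x|s d m];
  by rewrite /upd; case: eqP => [->|_] H; left; auto.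
Qed.

Lemma net_extends_refl cf t : net_extends cf (net cf) t.
Proof. by left. Qed.

Lemma net_extends_broadcast cf t i m :
  (i \notin F -> forall d, justified i d m t) -> net_extends cf (net cf ++ send_all i m) t.
Proof.
move=> Hm s d m' /List.in_app_iff [|/in_send_all [-> ->]]; first by left.
by right=> /Hm.
Qed.

Lemma receive_spec cf s d m cf' : step Qs F cf (Receive s d m) cf' ->
  exists l1 l2 L, [/\ net cf = l1 ++ (s, d, m) :: l2, cf' = setl cf d L (l1 ++ l2),
    forall x, List.In x (pendS L) ->
      List.In x (pendS (lst cf d)) \/ (x.1 = s /\ m = DistributeS x.2) &
    forall s' m', recorded L s' m' -> recorded (lst cf d) s' m' \/ (s' = s /\ m' = m)].
Proof.
case=> _ [l1 [l2 [Hnet ->]]]; exists l1, l2; eexists; split; first exact: Hnet; first by [].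
- move=> x; case: m {Hnet} => [S||||T] /= Hx; try by left.
  by move: Hx; rewrite -cats1 List.in_app_iff => -[|[<-|[]]]; [left|right].
- move=> s' m'; case: m {Hnet} => [S||||T]; case: m' => [S'||||T'] //= H; try by left.
  all: by move: H; rewrite in_setU1 => /orP [/eqP->|]; [right|left].
Qed.

Lemma sentT_step (cf : config P V) ev cf' q :
  step Qs F cf ev cf' -> sentT (lst cf q) -> sentT (lst cf' q).
Proof.
case: ev => [|s d m|i x|i j x|s d m|i|i j S|i|i|i|i|i j T|i] /= Hstep Hq;
  decompose [and ex ex2] Hstep; subst => //=.
all: try case: ifP => _ /=.
all: rewrite /upd; case: eqP => [?|] //; subst => //.
by destruct m.
Qed.

Section Steps.
Hypothesis Hinit : c 0 = cinit P V.
Hypothesis Hstep : forall t, step Qs F (c t) (e t) (c t.+1).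

Lemma invariant_step t : invariant (c t) t -> invariant (c t.+1) t.+1.
Proof.
move=> Hi; move: (Hstep t); rewrite /step /setl.
case E: (e t) => [|s d m|i x|i j x|s d m|i|i j S|i|i|i|i|i j T|i] /=.
- by move=> ->; apply: invariant_mono.
- case=> sF ->; apply: (invariant_frame Hi) => [||s' d' m']; try by left.
  by case/List.in_app_iff => [|[[<- _ _]|[]]]; [left|right; rewrite sF].
- by case=> _ [_ ->]; apply: (invariant_update Hi _ _ (@net_extends_refl _ _)).
- by case=> _ ->; apply: (invariant_update Hi _ _ (@net_extends_refl _ _)).
- case/receive_spec => l1 [l2 [L [Hnet -> HpL HrL]]]; rewrite /setl.
  have Hin : List.In (s, d, m) (net (c t)) by rewrite Hnet List.in_app_iff; right; left.
  apply: (invariant_frame Hi) => [q x|s' d' m'|s' d' m' H]; last first.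
  + by left; move: H; rewrite Hnet !List.in_app_iff /=; tauto.
  + rewrite /upd; case: eqP => [->|_]; last by left.
    case/HrL => [|[-> ->]]; first by left.
    by right=> /(in_transit_justified Hi Hin) /justified_mono.
  + rewrite /upd; case: eqP => [->|_]; last by left.
    case/HpL => [|[-> Em]]; first by left.
    by right; exists t => //; exists x.2; rewrite E Em.
- by case=> _ [_ [_ ->]]; apply: (invariant_update Hi _ _ (net_extends_broadcast _)).
- case=> _ [_ [l1 [l2 [Hpend ->]]]].
  have HpL x : List.In x (l1 ++ l2) -> List.In x (pendS (lst (c t) i)).
    by rewrite Hpend !List.in_app_iff /=; tauto.
  have jS : List.In (j, S) (pendS (lst (c t) i)).
    by rewrite Hpend List.in_app_iff; right; left.
  case: ifP => sentTi; apply: (invariant_update Hi) => //; first exact: net_extends_refl.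
  move=> s d m /List.in_app_iff [|[[<- <- <-]|[]]]; first by left.
  by right=> _; exists t => //; rewrite sentTi; split=> //; exact: pending_received Hi _ _ jS.
- case=> _ [_ [_ ->]]; apply: (invariant_update Hi _ _ (net_extends_broadcast _)) => //.
  by move=> _ d; exists t.
- case=> _ [_ [_ ->]]; apply: (invariant_update Hi _ _ (net_extends_broadcast _)) => //.
  by move=> _ d; exists t => //; left.
- case=> _ [_ [_ ->]]; apply: (invariant_update Hi _ _ (net_extends_broadcast _)) => //.
  by move=> _ d; exists t => //; right.
- by case=> _ [_ [_ ->]]; apply: (invariant_update Hi _ _ (net_extends_broadcast _)).
- by case=> _ [_ [? [? [_ ->]]]]; apply: (invariant_update Hi _ _ (@net_extends_refl _ _)).
- by case=> _ [_ [_ ->]]; apply: (invariant_update Hi _ _ (@net_extends_refl _ _)).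
Qed.

Lemma invariant_at t : invariant (c t) t.
Proof. by elim: t => [|t /invariant_step //]; rewrite Hinit; apply: invariant_init. Qed.

Lemma sentT_mono t0 t1 q : t0 <= t1 -> sentT (lst (c t0) q) -> sentT (lst (c t1) q).
Proof.
move/subnK <-; elim: (t1 - t0) => // n IH /IH; rewrite addSn; exact: sentT_step.
Qed.

Lemma distT_sets_sentT q t : e t = DoDistT q -> sentT (lst (c t.+1) q).
Proof. by move: (Hstep t) => + E; rewrite E => -[_ [_ [_ ->]]]; rewrite /= /upd eqxx. Qed.

Lemma ack_receivedS_before_distT r q t t0 :
  q \notin F -> q \in ackFrom (lst (c t) r) -> e t0 = DoDistT q -> receivedS_before r q t0.
Proof.
move=> qF qA E.
have [ta _ [unsent recvS]] := recorded_justified (invariant_at t) (m := AckM) qA qF.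
apply: occurs_before_mono recvS; rewrite leqNgt; apply: contra unsent => lt_t0_ta.
exact: sentT_mono lt_t0_ta (distT_sets_sentT E).
Qed.

Lemma ready_quorum_receivedS r t : e t = DoReady r ->
  exists2 Q, Q \in Qs r & forall q, q \in Q -> q \notin F ->
    forall t0, e t0 = DoDistT q -> receivedS_before r q t0.
Proof.
move=> E; move: (Hstep t); rewrite E => -[_ [_ [[Q Qr sQA] _]]].
by exists Q => // q qQ qF t0; apply: ack_receivedS_before_distT (subsetP sQA q qQ).
Qed.

Section Guild.
Variables (Fs : P -> {set {set P}}) (G : {set P}).
Hypotheses (HQ : asym_quorum_system Fs Qs) (HG : guild Fs Qs F G).

Definition ready_before (t : nat) : Prop :=
  exists2 r, r \in G & occurs_before (fun t' => e t' = DoReady r) t.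

Lemma confirm_after_ready g t :
  g \in G -> e t = DoConfirm6 g \/ e t = DoConfirm7 g -> ready_before t.
Proof.
elim/ltn_ind: t g => t IH g gG [] E; move: (Hstep t); rewrite E.
- case=> _ [_ [[Q Qg sQR] _]].
  have [x xQ xG] := guild_quorum_meet HQ HG gG Qg.
  have [t' lt_t't Ex] := recorded_justified (invariant_at t) (m := ReadyM)
    (subsetP sQR x xQ) (guild_correct HG xG).
  by exists x => //; exists t'.
- case=> _ [_ [[K [HK sKC]] _]].
  have [y yK yG] := guild_kernel_meet HG gG HK.
  have [t' lt_t't Ey] := recorded_justified (invariant_at t) (m := ConfirmM)
    (subsetP sKC y yK) (guild_correct HG yG).
  have [r rG Hr] := IH t' lt_t't y yG Ey.
  by exists r => //; apply: occurs_before_mono Hr; apply: ltnW.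
Qed.

Lemma distT_after_ready g t : g \in G -> e t = DoDistT g -> ready_before t.
Proof.
move=> gG E; move: (Hstep t); rewrite E => -[_ [_ [[Q Qg sQC] _]]].
have [x xQ xG] := guild_quorum_meet HQ HG gG Qg.
have [t' lt_t't Ex] := recorded_justified (invariant_at t) (m := ConfirmM)
  (subsetP sQC x xQ) (guild_correct HG xG).
have [r rG Hr] := confirm_after_ready xG Ex.
by exists r => //; apply: occurs_before_mono Hr; apply: ltnW.
Qed.

End Guild.
End Steps.
End Execution.

Theorem lemma3p5 (P : finType) (V : Type) (Fs Qs : P -> {set {set P}})
    (F : {set P}) (c : nat -> config P V) (e : nat -> event P V) :
  asym_quorum_system Fs Qs ->
  is_execution Qs F c e ->
  arb_safety Fs Qs F e ->
  has_guild Fs Qs F ->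
  exists2 i, in_Gmax Fs Qs F i &
    exists2 Q, Q \in Qs i &
      forall q, q \in Q -> q \notin F ->
      forall t, e t = DoDistT q ->
        exists2 t', t' < t & exists S, e t' = Receive i q (DistributeS S).
Proof.
move=> HQ [Hinit Hstep] _ [G HG /set0Pn [g gG]].
have [[t [r rG [t' _ Er]]] | no_ready] := classic (exists t, ready_before e G t).
  exists r; first by exists G.
  exact: (ready_quorum_receivedS Hinit Hstep Er).
have [_ [Q Qg sQG]] := HG g gG.
exists g; first by exists G.
exists Q => // q qQ _ t Et; exfalso; apply: no_ready.
by exists t; exact: (distT_after_ready Hinit Hstep HQ HG (subsetP sQG q qQ) Et).
Qed.
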